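(* Let $n\geqslant 1$ and $1\leqslant d\leqslant n-1$ be integers. Then \begin{align*} &\sum_{k=1}^{n-1}q^k\begin{bmatrix}2k\\ k+d\end{bmatrix}\frac{(-q^{k+1};q)_{n-k}}{[k]} =-\sum_{k=1}^{\lfloor(n+1-d)/2\rfloor}(-1)^kq^{3k^2+(3d-5)k-2d+2}\frac{[2d+4k-2]}{[d][n]}\begin{bmatrix}2n\\ n-d-2k+1\end{bmatrix}, \end{align*} and \begin{align*} \sum_{k=1}^{n}q^k\begin{bmatrix}2k\\ k+d\end{bmatrix}\frac{(-q^{k+1};q)_{n-k}^2}{[k]} =\sum_{k=d}^{n-1}q^{\binom{k+1}{2}-\binom{d}{2}}\frac{1}{[d]}\begin{bmatrix}2n+1\\ n-k\end{bmatrix}+\frac{q^{\binom{n+1}{2}-\binom{d}{2}}}{[d]}. \end{align*}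
   Context: Here $q$ is an indeterminate, $[m]=(1-q^m)/(1-q)=1+q+\cdots+q^{m-1}$ is the $q$-integer, and $\lfloor x\rfloor$ is the largest integer $\le x$. For $n\geq 1$, $(x;q)_n=(1-x)(1-xq)\cdots(1-xq^{n-1})$ and $(x;q)_0=1$. The $q$-binomial coefficient is $\begin{bmatrix}n\\ k\end{bmatrix}=\frac{(q;q)_n}{(q;q)_k(q;q)_{n-k}}$ if $0\leqslant k\leqslant n$ and $0$ otherwise. *)

From mathcomp Require Import all_boot all_order all_algebra.
Set Implicit Arguments. Unset Strict Implicit. Unset Printing Implicit Defensive.
Import GRing.Theory Num.Theory.
Local Open Scope ring_scope.

Definition Qq : fieldType := {fraction {poly rat}}.
Definition q : Qq := tofrac ('X : {poly rat}).

Definition qpoch (x : Qq) (n : nat) : Qq := \prod_(i < n) (1 - x * q ^+ i).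

Definition qint (m : nat) : Qq := (1 - q ^+ m) / (1 - q).

Definition qbin (n k : nat) : Qq :=
  if (k <= n)%N then qpoch q n / (qpoch q k * qpoch q (n - k)) else 0.

From mathcomp Require Import all_boot all_order all_algebra.
From mathcomp Require Import ring zify.
Import GRing.Theory Num.Theory.
Local Open Scope ring_scope.

(* Splitting off the last factor
   of (-t^(k+1); t)_(n-k), the left-hand sides satisfy first-order recurrences
   in n, with multiplier 1 + t^(n+1), resp. (1 + t^(n+1))^2, and an explicit
   inhomogeneous term.  The right-hand sides satisfy the same recurrences since,
   summand by summand, the difference between the versions for n + 1 and n is
   a telescoping difference of an explicit certificate; once all Gaussian
   binomials in it are reduced to a single one by the shift rules, each such
   summand identity is a rational identity in powers of t. *)

Section QIdentities.

Variables (F : fieldType) (t : F).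

Definition poch (x : F) (n : nat) : F := \prod_(i < n) (1 - x * t ^+ i).
Definition qnum (m : nat) : F := (1 - t ^+ m) / (1 - t).
Definition gauss (n k : nat) : F :=
  if (k <= n)%N then poch t n / (poch t k * poch t (n - k)) else 0.

Lemma poch0 x : poch x 0 = 1.
Proof. by rewrite /poch big_ord0. Qed.

Lemma pochS x n : poch x n.+1 = poch x n * (1 - x * t ^+ n).
Proof. by rewrite /poch big_ord_recr. Qed.

Lemma poch_tS n : poch t n.+1 = poch t n * (1 - t ^+ n.+1).
Proof. by rewrite pochS exprS. Qed.

Lemma gauss_gt n k : (n < k)%N -> gauss n k = 0.
Proof. by rewrite /gauss ltnNge => /negbTE ->. Qed.

Lemma gauss_sym n k : (k <= n)%N -> gauss n (n - k) = gauss n k.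
Proof. by move=> kn; rewrite /gauss leq_subr subKn // kn [poch t k * _]mulrC. Qed.

Lemma gaussSS n k : gauss n.+1 k.+1 = gauss n k * (1 - t ^+ n.+1) / (1 - t ^+ k.+1).
Proof.
case: (leqP k n) => [kn | nk]; last by rewrite !gauss_gt ?mul0r.
by rewrite /gauss ltnS kn subSS !poch_tS !invfM; ring.
Qed.

Lemma poch_negX_subSn k n : (k <= n)%N ->
  poch (- t ^+ k.+1) (n.+1 - k) = poch (- t ^+ k.+1) (n - k) * (1 + t ^+ n.+1).
Proof. by move=> kn; rewrite subSn // pochS mulNr opprK -exprD addSn subnKC. Qed.

Hypothesis t_neq0 : t != 0.
Hypothesis t_nonroot : forall m, (0 < m)%N -> t ^+ m != 1.

Lemma oneBX_neq0 {m} : (0 < m)%N -> 1 - t ^+ m != 0.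
Proof. by move=> m_gt0; rewrite subr_eq0 eq_sym t_nonroot. Qed.

Lemma oneB_neq0 : 1 - t != 0.
Proof. by rewrite -[t]expr1 oneBX_neq0. Qed.

Lemma qnum_neq0 {m} : (0 < m)%N -> qnum m != 0.
Proof. by move=> m_gt0; rewrite mulf_neq0 ?invr_eq0 ?oneBX_neq0 ?oneB_neq0. Qed.

Lemma poch_t_neq0 n : poch t n != 0.
Proof. by elim: n => [|n IH]; rewrite ?poch0 ?oner_neq0 // poch_tS mulf_neq0 ?oneBX_neq0. Qed.

Lemma gauss0 n : gauss n 0 = 1.
Proof. by rewrite /gauss subn0 poch0 mul1r divff ?poch_t_neq0. Qed.

Lemma gaussnn n : gauss n n = 1.
Proof. by rewrite /gauss leqnn subnn poch0 mulr1 divff ?poch_t_neq0. Qed.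

Lemma gaussS n k : gauss n k.+1 = gauss n k * (1 - t ^+ n / t ^+ k) / (1 - t ^+ k.+1).
Proof.
case: (ltngtP k n) => [kn | nk | ->].
- rewrite /gauss kn (ltnW kn) -expfB // -(subnSK kn) !poch_tS !invfM.
  by field; rewrite !oneBX_neq0 ?poch_t_neq0.
- by rewrite !gauss_gt ?mul0r // ltnW.
- by rewrite gauss_gt // divff ?expf_neq0 // subrr mulr0 mul0r.
Qed.

Lemma gaussSn n k : (k <= n)%N ->
  gauss n.+1 k = gauss n k * (1 - t ^+ n.+1) / (1 - t ^+ (n.+1 - k)).
Proof.
move=> kn; rewrite /gauss kn (leqW kn) subSn // !poch_tS.
by field; rewrite oneBX_neq0 ?poch_t_neq0.
Qed.

Local Ltac exponent_arith := rewrite -?exprM; repeat rewrite -?exprD -?exprSr; congr (_ ^+ _); nia.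

Variable d : nat.
Hypothesis d_gt0 : (0 < d)%N.

Definition poch_sum n :=
  \sum_(1 <= k < n) t ^+ k * gauss (2 * k) (k + d) * poch (- t ^+ k.+1) (n - k) / qnum k.

Lemma poch_sumS n : (0 < n)%N ->
  poch_sum n.+1 = (1 + t ^+ n.+1) * (poch_sum n + t ^+ n * gauss (2 * n) (n + d) / qnum n).
Proof.
move=> n_gt0; rewrite /poch_sum big_nat_recr //= mulrDr mulr_sumr; congr (_ + _).
  by apply: eq_big_nat => k /andP [_ kn]; rewrite poch_negX_subSn 1?ltnW //; ring.
by rewrite subSn // subnn pochS poch0 expr0; ring.
Qed.

(* The lower index n+1-d-2k of the paper is mirrored to n+d+2k-1, so that the
   sum may run up to k = n; for k >= 1 the exponent (3k-2)(k+d-1) is the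
   paper's 3k^2+(3d-5)k-2d+2. *)
Definition alt_term n k := (-1) ^+ k * t ^+ ((3 * k - 2) * (k + d - 1))
  * qnum (2 * d + 4 * k - 2) * gauss (2 * n) (n + d + 2 * k - 1).

Definition alt_sum n := \sum_(1 <= k < n.+1) alt_term n k.

Definition alt_cert n k := (-1) ^+ k * (t ^+ (n + 3 * (k * k) + 3 * (d * k)) / t ^+ k)
  * (1 + t ^+ n.+1) * qnum (d + 2 * k) * gauss (2 * n) (n + d + 2 * k) / qnum n.

Lemma alt_term_telescope n k : (0 < n)%N ->
  alt_term n.+1 k.+1 / qnum n.+1 - (1 + t ^+ n.+1) * alt_term n k.+1 / qnum n
  = alt_cert n k.+1 - alt_cert n k.
Proof.
move=> n_gt0; rewrite /alt_term /alt_cert /qnum.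
set p := (n + d + 2 * k)%N.
rewrite (_ : 2 * n.+1 = (2 * n).+2)%N; last by lia.
rewrite (_ : n.+1 + d + 2 * k.+1 - 1 = p.+2)%N; last by lia.
rewrite (_ : n + d + 2 * k.+1 - 1 = p.+1)%N; last by lia.
rewrite (_ : n + d + 2 * k.+1 = p.+2)%N; last by lia.
rewrite !gaussSS !gaussS [(-1) ^+ k.+1]exprS.
(* All binomials are now multiples of gauss (2 * n) p. *)
move: (oneBX_neq0 n_gt0) (oneBX_neq0 (ltn0Sn n)).
move: (oneBX_neq0 (ltn0Sn p)) (oneBX_neq0 (ltn0Sn p.+1)).
move: (expf_neq0 n t_neq0) (expf_neq0 d t_neq0) (expf_neq0 k t_neq0).
set T := t ^+ n; set D := t ^+ d; set K := t ^+ k; set S := (-1) ^+ k.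
set E := t ^+ (k * k); set Z := t ^+ (d * k).
have -> : t ^+ ((3 * k.+1 - 2) * (k.+1 + d - 1)) = E ^+ 3 * Z ^+ 3 * K * D by exponent_arith.
have -> : t ^+ (2 * d + 4 * k.+1 - 2) = D ^+ 2 * K ^+ 4 * t ^+ 2 by exponent_arith.
have -> : t ^+ (2 * n).+2 = T ^+ 2 * t ^+ 2 by exponent_arith.
have -> : t ^+ (2 * n).+1 = T ^+ 2 * t by exponent_arith.
have -> : t ^+ (2 * n) = T ^+ 2 by exponent_arith.
have -> : t ^+ p.+2 = T * D * K ^+ 2 * t ^+ 2 by exponent_arith.
have -> : t ^+ p.+1 = T * D * K ^+ 2 * t by exponent_arith.
have -> : t ^+ p = T * D * K ^+ 2 by exponent_arith.
have -> : t ^+ n.+1 = T * t by exponent_arith.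
have -> : t ^+ k.+1 = K * t by exponent_arith.
have -> : t ^+ (d + 2 * k.+1) = D * K ^+ 2 * t ^+ 2 by exponent_arith.
have -> : t ^+ (d + 2 * k) = D * K ^+ 2 by exponent_arith.
have -> : t ^+ (n + 3 * (k * k) + 3 * (d * k)) = T * E ^+ 3 * Z ^+ 3 by exponent_arith.
have -> : t ^+ (n + 3 * (k.+1 * k.+1) + 3 * (d * k.+1))
  = T * E ^+ 3 * Z ^+ 3 * K ^+ 6 * D ^+ 3 * t ^+ 3 by exponent_arith.
move=> nzK nzD nzT nzp2 nzp1 nzn1 nzn.
by field; rewrite oneB_neq0 t_neq0 nzK nzD nzT nzp2 nzp1 nzn1 nzn.
Qed.

Lemma alt_sumS {n} : (0 < n)%N ->
  alt_sum n.+1 / qnum n.+1 - (1 + t ^+ n.+1) * alt_sum n / qnum n = - alt_cert n 0.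
Proof.
move=> n_gt0; rewrite /alt_sum big_nat_recr //= [alt_term n.+1 n.+1]/alt_term gauss_gt; last by lia.
rewrite mulr0 addr0 !big_add1 /= mulr_suml mulr_sumr mulr_suml -sumrB.
under eq_big_nat => k _ do rewrite alt_term_telescope //.
rewrite telescope_sumr // /alt_cert [gauss _ (n + d + 2 * n)]gauss_gt; last by lia.
by rewrite mulr0 mul0r sub0r.
Qed.

Lemma poch_sum_alt_sum n : (0 < n)%N -> poch_sum n * (qnum d * qnum n) = - alt_sum n.
Proof.
elim: n => [//|[_ _|n IH _]].
  by rewrite /poch_sum /alt_sum big_geq // big_nat1 /alt_term gauss_gt ?mul0r ?mulr0 ?oppr0 //; lia.
have nz_d := qnum_neq0 d_gt0; have nz_n1 := qnum_neq0 (ltn0Sn n).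
have poch_sum_n : poch_sum n.+1 = - alt_sum n.+1 / (qnum d * qnum n.+1).
  by rewrite -IH // mulfK // mulf_neq0.
have /(canRL (addrK _)) alt_sum_n := alt_sumS (ltn0Sn n).
rewrite poch_sumS // poch_sum_n -[alt_sum n.+2](divfK (qnum_neq0 (ltn0Sn n.+1))) {}alt_sum_n.
rewrite /alt_cert !muln0 !addn0 expr0 divr1 mul1r.
by field; rewrite nz_d nz_n1.
Qed.

Lemma exprz_natB (a b : nat) : t ^ (a%:Z - b%:Z) = t ^+ a / t ^+ b.
Proof. by rewrite expfzDr // -exprnN -exprnP. Qed.

Lemma poch_sumE n : (0 < n)%N ->
  poch_sum n = - \sum_(1 <= k < ((n + 1 - d) %/ 2).+1)
     (-1) ^+ k * t ^ ((3 * (k ^ 2))%:Z + (3 * d%:Z - 5) * k%:Z - 2 * d%:Z + 2)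
     * qnum (2 * d + 4 * k - 2) / (qnum d * qnum n) * gauss (2 * n) (n + 1 - d - 2 * k).
Proof.
move=> n_gt0; set K := ((n + 1 - d) %/ 2)%N.
rewrite -[poch_sum n](mulfK (mulf_neq0 (qnum_neq0 d_gt0) (qnum_neq0 n_gt0))) poch_sum_alt_sum //.
rewrite mulNr /alt_sum mulr_suml (big_cat_nat _ (n := K.+1)) //=; last by lia.
rewrite [X in _ + X]big_nat_cond [X in _ + X]big1 ?addr0; last first.
  move=> k /andP [/andP [K_lt_k _] _].
  by rewrite /alt_term gauss_gt ?mulr0 ?mul0r //; lia.
congr (- _); apply: eq_big_nat => k /andP [k_gt0 k_le_K].
rewrite -[gauss _ (n + 1 - d - 2 * k)]gauss_sym; last by lia.
rewrite (_ : (2 * n - (n + 1 - d - 2 * k) = n + d + 2 * k - 1)%N); last by lia.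
rewrite (_ : _ + _ = ((3 * k - 2) * (k + d - 1))%N%:Z); last by nia.
by rewrite -exprnP /alt_term mulrAC.
Qed.

Definition poch2_sum n := \sum_(1 <= k < n.+1)
  t ^+ k * gauss (2 * k) (k + d) * poch (- t ^+ k.+1) (n - k) ^+ 2 / qnum k.

Lemma poch2_sumS n : poch2_sum n.+1
  = (1 + t ^+ n.+1) ^+ 2 * poch2_sum n + t ^+ n.+1 * gauss (2 * n.+1) (n.+1 + d) / qnum n.+1.
Proof.
rewrite /poch2_sum big_nat_recr //= mulr_sumr subnn poch0 expr1n mulr1; congr (_ + _).
by apply: eq_big_nat => k /andP [_ kn]; rewrite poch_negX_subSn //; ring.
Qed.

Definition bin_sum n := \sum_(d <= k < n.+1) t ^+ 'C(k.+1, 2) * gauss (2 * n + 1) (n - k).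

Definition bin_cert n m :=
  t ^+ 'C(m, 2) * qnum m * t ^+ n.+1 * gauss (2 * n + 2) (n.+1 - m) / qnum n.+1.

Lemma bin_term_telescope n k : (k <= n)%N ->
  t ^+ 'C(k.+1, 2) * gauss (2 * n.+1 + 1) (n.+1 - k)
  - (1 + t ^+ n.+1) ^+ 2 * (t ^+ 'C(k.+1, 2) * gauss (2 * n + 1) (n - k))
  = bin_cert n k - bin_cert n k.+1.
Proof.
move=> /subnK <-; set j := (n - k)%N; rewrite /bin_cert /qnum.
set N := (2 * (j + k) + 1)%N.
rewrite (_ : 2 * (j + k).+1 + 1 = N.+2)%N; last by lia.
rewrite (_ : 2 * (j + k) + 2 = N.+1)%N; last by lia.
rewrite (_ : (j + k).+1 - k = j.+1)%N; last by lia.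
rewrite (_ : (j + k).+1 - k.+1 = j)%N; last by lia.
rewrite addnK !gaussSS gaussSn; last by lia.
have /oneBX_neq0 nzN : (0 < N.+1 - j)%N by lia.
move: nzN (oneBX_neq0 (ltn0Sn j)) (oneBX_neq0 (ltn0Sn (j + k))).
rewrite binS bin1 exprD.
set J := t ^+ j; set K := t ^+ k; set C := t ^+ 'C(k, 2).
have -> : t ^+ N.+2 = J ^+ 2 * K ^+ 2 * t ^+ 3 by exponent_arith.
have -> : t ^+ N.+1 = J ^+ 2 * K ^+ 2 * t ^+ 2 by exponent_arith.
have -> : t ^+ (N.+1 - j) = J * K ^+ 2 * t ^+ 2 by exponent_arith.
have -> : t ^+ j.+1 = J * t by exponent_arith.
have -> : t ^+ (j + k).+1 = J * K * t by exponent_arith.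
have -> : t ^+ k.+1 = K * t by exponent_arith.
move=> nzN nzj nzjk.
by field; rewrite oneB_neq0 nzN nzj nzjk.
Qed.

Lemma bin_sumS n : (d <= n)%N -> bin_sum n.+1 = (1 + t ^+ n.+1) ^+ 2 * bin_sum n + bin_cert n d.
Proof.
move=> dn; rewrite /bin_sum big_nat_recr /= ?(leqW dn) // subnn gauss0 mulr1.
have -> : \sum_(d <= k < n.+1) t ^+ 'C(k.+1, 2) * gauss (2 * n.+1 + 1) (n.+1 - k)
  = \sum_(d <= k < n.+1) ((1 + t ^+ n.+1) ^+ 2 * (t ^+ 'C(k.+1, 2) * gauss (2 * n + 1) (n - k))
                          - (bin_cert n k.+1 - bin_cert n k)).
  by apply: eq_big_nat => k /andP [_ kn]; rewrite opprB -bin_term_telescope //; ring.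
rewrite sumrB telescope_sumr 1?ltnW // -mulr_sumr.
have -> : bin_cert n n.+1 = t ^+ 'C(n.+2, 2).
  by rewrite /bin_cert subnn gauss0 mulr1 mulrAC mulfK ?qnum_neq0 // -exprD [in RHS]binS bin1.
ring.
Qed.

Lemma poch2_sum_bin_sum n : (d <= n)%N -> poch2_sum n * (qnum d * t ^+ 'C(d, 2)) = bin_sum n.
Proof.
elim: n => [|n IH]; first by rewrite leqNgt d_gt0.
rewrite leq_eqVlt ltnS => /orP [/eqP <- | dn].
  rewrite /poch2_sum /bin_sum big_nat_recr //= big_nat1 subnn poch0 expr1n mulr1 gauss0.
  rewrite big_nat_cond big1 ?add0r => [|k /andP [/andP [_ kd] _]]; last first.
    by rewrite gauss_gt ?mulr0 ?mul0r //; lia.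
  rewrite addnn -mul2n gaussnn mulr1 binS bin1 exprD.
  by field; rewrite qnum_neq0.
rewrite poch2_sumS bin_sumS // -IH // /bin_cert -[gauss _ (n.+1 - d)]gauss_sym; last by lia.
rewrite (_ : 2 * n + 2 - (n.+1 - d) = n.+1 + d)%N; last by lia.
rewrite (_ : 2 * n + 2 = 2 * n.+1)%N; last by lia.
ring.
Qed.

Lemma poch2_sumE n : (d <= n)%N ->
  poch2_sum n = \sum_(d <= k < n) t ^ (('C(k.+1, 2))%:Z - ('C(d, 2))%:Z) / qnum d
                * gauss (2 * n + 1) (n - k)
              + t ^ (('C(n.+1, 2))%:Z - ('C(d, 2))%:Z) / qnum d.
Proof.
move=> dn; have nz : qnum d * t ^+ 'C(d, 2) != 0 by rewrite mulf_neq0 ?qnum_neq0 ?expf_neq0.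
rewrite -[poch2_sum n](mulfK nz) poch2_sum_bin_sum // /bin_sum big_nat_recr //= subnn gauss0 mulr1.
rewrite mulrDl mulr_suml !exprz_natB; congr (_ + _); last by field; rewrite qnum_neq0 ?expf_neq0.
apply: eq_bigr => k _; rewrite exprz_natB.
by field; rewrite qnum_neq0 ?expf_neq0.
Qed.

End QIdentities.

Lemma q_neq0 : q != 0.
Proof. by rewrite tofrac_eq0 polyX_eq0. Qed.

Lemma q_nonroot m : (0 < m)%N -> q ^+ m != 1.
Proof.
move=> m_gt0; rewrite /q -rmorphXn -(rmorph1 (@tofrac _)) tofrac_eq.
apply: contraTneq m_gt0 => /(congr1 (fun p : {poly rat} => size p)).
by rewrite size_polyXn size_poly1 => -[->].
Qed.

Theorem theorem1p4 (n d : nat) :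
  (1 <= n)%N -> (1 <= d)%N -> (d <= n - 1)%N ->
  (\sum_(1 <= k < n) q ^+ k * qbin (2 * k) (k + d) * qpoch (- q ^+ k.+1) (n - k) / qint k
   = - \sum_(1 <= k < ((n + 1 - d) %/ 2).+1)
         (-1) ^+ k * q ^ ((3 * (k ^ 2))%:Z + (3 * d%:Z - 5) * k%:Z - 2 * d%:Z + 2)
         * qint (2 * d + 4 * k - 2) / (qint d * qint n)
         * qbin (2 * n) (n + 1 - d - 2 * k))
  /\
  (\sum_(1 <= k < n.+1) q ^+ k * qbin (2 * k) (k + d) * (qpoch (- q ^+ k.+1) (n - k)) ^+ 2 / qint k
   = \sum_(d <= k < n) q ^ (('C(k.+1, 2))%:Z - ('C(d, 2))%:Z) / qint d * qbin (2 * n + 1) (n - k)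
     + q ^ (('C(n.+1, 2))%:Z - ('C(d, 2))%:Z) / qint d).
Proof.
move=> n_gt0 d_gt0 d_lt_n; have d_le_n : (d <= n)%N by lia.
split; first exact: poch_sumE _ q q_neq0 q_nonroot d d_gt0 n n_gt0.
exact: poch2_sumE _ q q_neq0 q_nonroot d d_gt0 n d_le_n.
Qed.
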